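(* For each real number $\epsilon>0$ and each integer $m\ge 3$ there is a positive integer $n$ and a subset $S\subseteq\mathbb{Z}/n\mathbb{Z}$ with $|S|\ge(1-\epsilon)n$ such that $S$ is simultaneously $(k,j)$-product-free for all positive integers $k>j$ with $k+j\le m$.
   Context: For positive integers $k,j$, a subset $S\subseteq\mathbb{Z}/n\mathbb{Z}$ is called $(k,j)$-product-free if there is no solution of $a_1a_2\cdots a_k\equiv b_1b_2\cdots b_j\pmod n$ with all $a_1,\dots,a_k,b_1,\dots,b_j\in S$ (not necessarily distinct). *)

From mathcomp Require Import all_boot.
From Stdlib Require Import Reals.
Set Implicit Arguments. Unset Strict Implicit. Unset Printing Implicit Defensive.

(* Z/nZ is modelled by residues 'I_n (values 0..n-1), n > 0; multiplication
   is taken modulo n. *)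
Definition product_free (n k j : nat) (S : {set 'I_n}) : Prop :=
  ~ exists (a : 'I_k -> 'I_n) (b : 'I_j -> 'I_n),
      (forall i, a i \in S) /\ (forall i, b i \in S) /\
      (\prod_(i < k) (a i : nat) = \prod_(i < j) (b i : nat) %[mod n]).

From Stdlib Require Import Reals.
From Stdlib Require Psatz.
From mathcomp Require Import all_boot all_order all_algebra zify ring lra.
Import Order.TTheory GRing.Theory Num.Theory.

Set Implicit Arguments.
Unset Strict Implicit.
Unset Printing Implicit Defensive.

(* Take a finite set ps of primes with mu = \sum_(p in ps) 1/p large but
   \sum_(p in ps) 1/p^2 small (possible because \sum 1/p diverges, proved
   below by Erdos' smooth-number count), let n = \prod_(p in ps) p ^ (m+1)
   and let omega a be the number of p in ps dividing a.  Over a uniform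
   residue a mod n, omega a has mean mu and variance at most mu, so by
   Chebyshev almost every residue is "good": no p^2 (p in ps) divides it and
   |omega a - mu| <= D := mu / (4m).  If a_1...a_k = b_1...b_j mod n with all
   factors good, comparing p-adic valuations (all < m+1) gives
   \sum omega a_i = \sum omega b_i, impossible since the left side is at
   least k (mu - D) and the right side at most j (mu + D). *)

Lemma count_dvd_succ d n : 0 < d -> \sum_(i < n) (d %| i.+1) = n %/ d.
Proof.
move=> d_gt0; elim: n => [|n IHn]; first by rewrite big_ord0 div0n.
by rewrite big_ord_recr /= IHn (divnS _ d_gt0) addnC.
Qed.

Lemma count_dvd d n : 0 < d -> d %| n ->
  (\sum_(i < n) (d %| i)%:R = n%:R / d%:R :> rat)%R.
Proof.
move=> d_gt0 dvd_dn; rewrite -natr_sum -natq_div //; congr (_%:R)%R.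
case: n dvd_dn => [|n] dvd_dn; first by rewrite big_ord0 div0n.
by rewrite big_ord_recl /= dvdn0 count_dvd_succ // (divnS _ d_gt0) dvd_dn.
Qed.

Lemma logn_eq_of_eqmod p e A B : prime p -> 0 < A -> 0 < B ->
  A = B %[mod p ^ e] -> logn p A < e -> logn p B < e ->
  logn p A = logn p B.
Proof.
move=> p_pr A_gt0 B_gt0 eq_AB.
wlog lt_AB : A B A_gt0 B_gt0 eq_AB / logn p A < logn p B.
  move=> wlog_lt ltA ltB; case: (ltngtP (logn p A) (logn p B)) => // lt_ab.
    exact: wlog_lt.
  by apply/esym/wlog_lt.
move=> ltA ltB; have dvd_e : p ^ (logn p A).+1 %| p ^ e by rewrite dvdn_exp2l.
have : p ^ (logn p A).+1 %| B by rewrite pfactor_dvdn.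
rewrite /dvdn -(modn_dvdm B dvd_e) -eq_AB modn_dvdm // -/(dvdn _ _).
by rewrite pfactor_dvdn // ltnn.
Qed.

Lemma logn_prod p k (F : 'I_k -> nat) : prime p -> (forall i, 0 < F i) ->
  logn p (\prod_(i < k) F i) = \sum_(i < k) logn p (F i).
Proof.
move=> p_pr F_gt0; elim: k F F_gt0 => [|k IHk] F F_gt0.
  by rewrite !big_ord0 logn1.
by rewrite !big_ord_recr /= lognM ?IHk ?prodn_gt0.
Qed.

Lemma logn_not_sq_dvd p a : prime p -> 0 < a -> ~~ (p ^ 2 %| a) ->
  logn p a = (p %| a).
Proof.
move=> p_pr a_gt0; rewrite pfactor_dvdn // -ltnNge ltnS => le1.
apply/eqP; rewrite eqn_leq -{2}[p]expn1 pfactor_dvdn //.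
by case: (logn p a) le1 => [|[]].
Qed.

(* Divergence of the sum of prime reciprocals (Erdos' counting argument): if
   P is fixed, then for N = 2 ^ 2 ^ (P + 5) at most half of 1, ..., N are
   P-smooth, so the primes in (P, N] cover at least N / 2 integers, which
   forces the sum of their reciprocals to exceed 1 / 2. *)

Definition smooth (P y : nat) : bool := all (fun p => p <= P) (primes y).

Lemma logn_le_of_le_exp2 p y M : 0 < y -> y <= 2 ^ M -> logn p y <= M.
Proof.
move=> y_gt0 yM; have [p_pr|] := boolP (prime p); last by rewrite /logn => /negbTE ->.
have pe_le_y : p ^ logn p y <= y by apply: dvdn_leq => //; rewrite pfactor_dvdn.
rewrite -(leq_exp2l _ _ (isT : 1 < 2)); apply: leq_trans yM.
apply: leq_trans pe_le_y; case: (logn p y) => // e.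
by rewrite leq_exp2r ?prime_gt1.
Qed.

Lemma smooth_logn P y p : smooth P y -> P < p -> logn p y = 0.
Proof.
move=> /allP y_smooth P_lt_p; apply/eqP; rewrite -leqn0 leqNgt logn_gt0.
by apply/negP => /y_smooth; rewrite leqNgt P_lt_p.
Qed.

(* A P-smooth number is determined by its valuations at 0, ..., P, each at
   most M for numbers up to 2 ^ M: there are at most (M + 1) ^ (P + 1) such
   numbers. *)
Lemma card_smooth P M :
  #|[set x : 'I_(2 ^ M) | smooth P x.+1]| <= M.+1 ^ P.+1.
Proof.
set A := [set x : 'I_(2 ^ M) | smooth P x.+1].
pose val_vector (x : 'I_(2 ^ M)) : {ffun 'I_P.+1 -> 'I_M.+1} :=
  [ffun i : 'I_P.+1 => inord (logn i x.+1)].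
have val_vector_inj : {in A &, injective val_vector}.
  move=> x y; rewrite !inE => x_smooth y_smooth eq_xy.
  apply/val_inj/succn_inj/eqn_from_log => // p.
  have [p_le_P|P_lt_p] := leqP p P; last first.
    by rewrite (smooth_logn x_smooth P_lt_p) (smooth_logn y_smooth P_lt_p).
  pose i := Ordinal (p_le_P : p < P.+1).
  have := congr1 (fun f : {ffun 'I_P.+1 -> 'I_M.+1} => val (f i)) eq_xy.
  by rewrite !ffunE /= !inordK // ltnS logn_le_of_le_exp2.
have := max_card [set val_vector x | x in A].
by rewrite card_in_imset // card_ffun !card_ord.
Qed.

(* Each non-P-smooth number in 1, ..., N has a prime divisor in (P, N]. *)
Lemma count_nonsmooth P N :
  \sum_(x < N) (~~ smooth P x.+1) <= \sum_(P.+1 <= p < N.+1 | prime p) N %/ p.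
Proof.
under [X in _ <= X]eq_bigr => p p_pr do rewrite -count_dvd_succ ?prime_gt0 //.
rewrite exchange_big /=; apply: leq_sum => x _.
have [//|/allPn[p]] := boolP (smooth P x.+1).
rewrite mem_primes -ltnNge => /and3P[p_pr _ p_dvd] P_lt_p.
have p_le_N : p < N.+1 by rewrite ltnS (leq_trans (dvdn_leq _ p_dvd)).
rewrite big_mkcond (bigD1_seq p) ?mem_index_iota ?P_lt_p ?iota_uniq //=.
by rewrite p_pr p_dvd leq_addr.
Qed.

(* The numerical inequality behind the choice N = 2 ^ 2 ^ (P + 5):
   twice the number of smooth numbers is at most N. *)
Lemma smooth_bound_exp P : 2 * (2 ^ (P + 5)).+1 ^ P.+1 <= 2 ^ 2 ^ (P + 5).
Proof.
have poly_le_exp t : (t + 6) * (t + 1) + 1 <= 2 ^ (t + 5).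
  elim: t => [//|t IHt]; have := ltn_expl t (isT : 1 < 2).
  rewrite addSn expnS expnD mulnC in IHt *; nia.
apply: (@leq_trans (2 * (2 ^ (P + 6)) ^ P.+1)).
  rewrite leq_mul2l leq_exp2r // (_ : P + 6 = (P + 5).+1) ?expnS; last by lia.
  by have := expn_gt0 2 (P + 5); lia.
by rewrite -expnM -expnS leq_exp2l //; have := poly_le_exp P; lia.
Qed.

(* At most half of 1, ..., N are P-smooth for N = 2 ^ 2 ^ (P + 5), so the
   multiples of the primes in (P, N] make up the other half. *)
Lemma primes_cover P (N := 2 ^ 2 ^ (P + 5)) :
  N <= N %/ 2 + \sum_(P.+1 <= p < N.+1 | prime p) N %/ p.
Proof.
have split_N : N = \sum_(x < N) smooth P x.+1 + \sum_(x < N) ~~ smooth P x.+1.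
  rewrite -big_split /=; transitivity (\sum_(x < N) 1).
    by rewrite big_const_ord iter_addn_0 mul1n.
  by apply: eq_bigr => x _; case: smooth.
have card_smooth_eq : \sum_(x < N) smooth P x.+1 = #|[set x : 'I_N | smooth P x.+1]|.
  by rewrite -sum1dep_card [RHS]big_mkcond; apply: eq_bigr => x _; case: smooth.
rewrite [X in X <= _]split_N leq_add ?count_nonsmooth // card_smooth_eq.
by rewrite (leq_trans (card_smooth P _)) // leq_divRL ?expn_gt0 // mulnC smooth_bound_exp.
Qed.

Local Open Scope ring_scope.

Lemma prime_reciprocals_half P : exists2 K, (P < K)%N &
  1 / 2 <= \sum_(P.+1 <= p < K | prime p) (p%:R : rat)^-1.
Proof.
pose N := (2 ^ 2 ^ (P + 5))%N.
have N_gt0 : (0 < N)%N by rewrite expn_gt0.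
have P_le_N : (P <= N)%N.
  have P_le_2P := ltnW (ltn_expl P (ltnSn 1)).
  rewrite (leq_trans P_le_2P) // leq_exp2l // (leq_trans P_le_2P) //.
  by rewrite leq_exp2l ?leq_addr.
exists N.+1 => //; set s := \sum_(_ <= p < _ | _) _.
have cover : (N <= N %/ 2 + \sum_(P.+1 <= p < N.+1 | prime p) N %/ p)%N.
  exact: primes_cover.
have half_le : ((N %/ 2)%:R : rat) <= N%:R / 2.
  by rewrite ler_pdivlMr // -natrM ler_nat leq_divM.
have tail_le : \sum_(P.+1 <= p < N.+1 | prime p) ((N %/ p)%:R : rat) <= N%:R * s.
  rewrite mulr_sumr; apply: ler_sum => p p_pr.
  by rewrite ler_pdivlMr ?ltr0n ?prime_gt0 // -natrM ler_nat leq_divM.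
rewrite -(ler_nat rat) natrD natr_sum in cover.
have N_pos : (0 : rat) < N%:R by rewrite ltr0n.
rewrite -(ler_pM2l N_pos); lra.
Qed.

Lemma prime_reciprocals_unbounded P (B : nat) : exists2 K, (P < K)%N &
  B%:R <= \sum_(P.+1 <= p < K | prime p) (p%:R : rat)^-1.
Proof.
suff [K P_lt_K sum_ge] : exists2 K, (P < K)%N &
    (2 * B)%:R / 2 <= \sum_(P.+1 <= p < K | prime p) (p%:R : rat)^-1.
  by exists K; rewrite // natrM in sum_ge; lra.
elim: (2 * B)%N => [|b [K P_lt_K IHb]].
  by exists P.+1; rewrite // mul0r sumr_ge0 // => p _; rewrite invr_ge0.
have [K' K_le_K' half_le] := prime_reciprocals_half K.-1.
rewrite prednK ?(leq_ltn_trans _ P_lt_K) // in K_le_K' half_le.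
exists K'; first exact: leq_trans K_le_K'.
rewrite (big_cat_nat P_lt_K K_le_K') /= -addn1 natrD mulrDl.
exact: lerD.
Qed.

(* 1 / k^2 <= 1 / (k - 1) - 1 / k for k >= 2, so the tail of the series of
   inverse squares beyond P telescopes to at most 1 / P. *)
Lemma inv_sq_tail P K : (0 < P)%N ->
  \sum_(P.+1 <= k < K) ((k ^ 2)%:R : rat)^-1 <= P%:R^-1.
Proof.
move=> P_gt0; have [K_le|P_lt_K] := leqP K P.+1.
  by rewrite big_geq // invr_ge0.
pose f k : rat := - (k.-1)%:R^-1.
have step k : (P < k)%N -> ((k ^ 2)%:R : rat)^-1 <= f k.+1 - f k.
  case: k => [//|j] P_lt_j; rewrite /f /= opprK addrC.
  have x_pos : (0 : rat) < j%:R by rewrite ltr0n; lia.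
  rewrite natrX -addn1 natrD; set x := j%:R in x_pos *.
  rewrite -subr_ge0 (_ : _ - _ = (x * (x + 1) ^+ 2)^-1); last first.
    by field; rewrite !gt_eqF // ltr_wpDr.
  by rewrite invr_ge0 ltW // mulr_gt0 // exprn_gt0 // ltr_wpDr.
apply: (le_trans (ler_sum_nat (fun k Pk => step k (andP Pk).1))).
by rewrite telescope_sumr 1?ltnW //= /f opprK gerDr oppr_le0 invr_ge0.
Qed.

(* A probabilistic reading of a uniform residue a mod n: for a set ps of
   primes dividing n, the number omega a of primes of ps dividing a has mean
   mu = \sum_(p in ps) 1/p and variance at most mu (the divisibility events
   are pairwise independent). *)
Section PrimeDivisorCount.

Variable ps : seq nat.
Hypotheses (ps_uniq : uniq ps) (ps_prime : all prime ps).

Definition omega (a : nat) : nat := \sum_(p <- ps) (p %| a).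

Definition mu : rat := \sum_(p <- ps) p%:R^-1.

Variable n : nat.
Hypothesis ps_dvd : {in ps, forall p, (p %| n)%N}.

Let p_gt0 p : p \in ps -> (0 < p)%N.
Proof. by move=> /(allP ps_prime)/prime_gt0. Qed.

(* Each p in ps divides n / p residues, so omega has mean mu. *)
Lemma mean_omega : \sum_(a < n) ((omega a)%:R : rat) = n%:R * mu.
Proof.
rewrite /omega; under eq_bigr do rewrite natr_sum.
rewrite exchange_big mulr_sumr; apply: eq_big_seq => p p_ps.
by rewrite count_dvd ?p_gt0 ?ps_dvd.
Qed.

Lemma joint_count p q : p \in ps -> q \in ps -> p != q ->
  \sum_(a < n) ((p %| a)%:R * (q %| a)%:R : rat) = n%:R * (p%:R^-1 * q%:R^-1).
Proof.
move=> p_ps q_ps p_neq_q.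
have [p_pr q_pr] := (allP ps_prime p p_ps, allP ps_prime q q_ps).
have coprime_pq : coprime p q by rewrite prime_coprime // dvdn_prime2.
under eq_bigr do rewrite -natrM mulnb -Gauss_dvd //.
rewrite count_dvd ?muln_gt0 ?p_gt0 // ?Gauss_dvd ?ps_dvd //.
by rewrite natrM invfM.
Qed.

(* Expanding omega^2 as a double sum over pairs (p, q): the diagonal
   contributes n mu and the off-diagonal pairs at most n mu^2. *)
Lemma second_moment_omega :
  \sum_(a < n) ((omega a)%:R ^+ 2 : rat) <= n%:R * (mu ^+ 2 + mu).
Proof.
have -> : n%:R * (mu ^+ 2 + mu) = \sum_(p <- ps)
    (\sum_(q <- ps) n%:R * (p%:R^-1 * q%:R^-1) + n%:R * p%:R^-1).
  rewrite mulrDr expr2 /mu big_distrlr big_split /= !mulr_sumr.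
  by congr (_ + _); apply: eq_bigr => p _; rewrite mulr_sumr.
rewrite /omega; under eq_bigr do rewrite natr_sum expr2 big_distrlr /=.
rewrite exchange_big big_seq [X in _ <= X]big_seq; apply: ler_sum => p p_ps.
rewrite exchange_big !(bigD1_seq p p_ps ps_uniq) /=.
under eq_bigr do rewrite -natrM mulnb andbb.
have rest_eq : \sum_(q <- ps | q != p) \sum_(a < n) ((p %| a)%:R * (q %| a)%:R)
    = \sum_(q <- ps | q != p) n%:R * (p%:R^-1 * q%:R^-1) :> rat.
  rewrite big_seq_cond [RHS]big_seq_cond; apply: eq_bigr => q /andP[q_ps q_neq_p].
  by rewrite joint_count // eq_sym.
rewrite rest_eq count_dvd ?p_gt0 ?ps_dvd //.
have : 0 <= n%:R * (p%:R^-1 * p%:R^-1) :> rat by rewrite !mulr_ge0 ?invr_ge0.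
lra.
Qed.

(* Hence the variance \sum (omega - mu)^2 = \sum omega^2 - n mu^2 is at most
   n mu. *)
Lemma variance_omega : \sum_(a < n) ((omega a)%:R - mu) ^+ 2 <= n%:R * mu.
Proof.
under eq_bigr do rewrite sqrrB.
rewrite big_split /= sumrB sumrMnl -mulr_suml mean_omega sumr_const card_ord.
rewrite -[mu ^+ 2 *+ n]mulr_natl -[_ *+ 2]mulr_natl.
have := second_moment_omega; rewrite !expr2; lra.
Qed.

End PrimeDivisorCount.

Definition good (ps : seq nat) (D : rat) (a : nat) : bool :=
  all (fun p => ~~ (p ^ 2 %| a)%N) ps && (((omega ps a)%:R - mu ps) ^+ 2 <= D ^+ 2).

Section GoodDensity.

Variables (ps : seq nat) (D : rat) (n : nat).
Hypotheses (ps_uniq : uniq ps) (ps_prime : all prime ps) (D_gt0 : 0 < D).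
Hypothesis ps_sq_dvd : {in ps, forall p, (p ^ 2 %| n)%N}.

(* A bad residue is divisible by some p ^ 2, or deviates from the mean by
   more than D (a union bound plus Chebyshev's inequality, pointwise). *)
Lemma bad_indicator_le (a : nat) :
  1 - (good ps D a)%:R <=
    \sum_(p <- ps) (p ^ 2 %| a)%:R + ((omega ps a)%:R - mu ps) ^+ 2 / D ^+ 2.
Proof.
have sq_ge0 : 0 <= \sum_(p <- ps) ((p ^ 2 %| a)%:R : rat).
  by rewrite sumr_ge0.
have dev_ge0 : 0 <= ((omega ps a)%:R - mu ps) ^+ 2 / D ^+ 2.
  by rewrite divr_ge0 ?sqr_ge0.
rewrite /good; have [no_sq|/allPn[p p_ps]] /= := boolP (all _ ps); last first.
  rewrite negbK => p_sq_dvd; rewrite (big_rem p p_ps) /= p_sq_dvd mulr1n.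
  have : 0 <= \sum_(q <- rem p ps) ((q ^ 2 %| a)%:R : rat) by rewrite sumr_ge0.
  lra.
set dev := ((omega ps a)%:R - mu ps) ^+ 2 in dev_ge0 *.
have [_|dev_gt] := boolP (dev <= D ^+ 2); rewrite /= ?mulr1n; first lra.
have : 1 < dev / D ^+ 2 by rewrite ltr_pdivlMr ?exprn_gt0 // mul1r ltNge.
lra.
Qed.

Lemma card_good :
  n%:R - \sum_(p <- ps) n%:R / (p ^ 2)%:R - n%:R * mu ps / D ^+ 2 <=
    #|[set a : 'I_n | good ps D a]|%:R.
Proof.
have card_eq : #|[set a : 'I_n | good ps D a]|%:R = \sum_(a < n) (good ps D a)%:R :> rat.
  rewrite -sum1dep_card natr_sum [LHS]big_mkcond /=.
  by apply: eq_bigr => a _; case: good.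
have ps_dvd : {in ps, forall p, (p %| n)%N}.
  by move=> p /ps_sq_dvd; apply: dvdn_trans; rewrite dvdn_exp.
have sq_count : \sum_(p <- ps) \sum_(a < n) (p ^ 2 %| a)%:R =
    \sum_(p <- ps) n%:R / (p ^ 2)%:R :> rat.
  apply: eq_big_seq => p p_ps; rewrite count_dvd ?ps_sq_dvd //.
  by rewrite expn_gt0 prime_gt0 ?(allP ps_prime).
have dev_sum : (\sum_(a < n) ((omega ps a)%:R - mu ps) ^+ 2) / D ^+ 2 <=
    n%:R * mu ps / D ^+ 2.
  by rewrite ler_wpM2r ?invr_ge0 ?sqr_ge0 ?variance_omega.
have : \sum_(a < n) (1 - (good ps D a)%:R) <= \sum_(a < n)
    (\sum_(p <- ps) (p ^ 2 %| a)%:R + ((omega ps a)%:R - mu ps) ^+ 2 / D ^+ 2).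
  by apply: ler_sum => a _; apply: bad_indicator_le.
rewrite sumrB sumr_const card_ord big_split /= exchange_big sq_count -mulr_suml.
rewrite card_eq; lra.
Qed.

End GoodDensity.

(* Product-freeness of the good residues: if a_1 ... a_k = b_1 ... b_j
   modulo n, where p ^ e divides n for every p in ps and j < k < e, then
   comparing p-adic valuations gives \sum_i omega a_i = \sum_i omega b_i;
   but the left side is at least k (mu - D) and the right side at most
   j (mu + D), which is smaller as soon as (2 j + 1) D < mu. *)
Section GoodProductFree.

Variables (ps : seq nat) (D : rat) (e n : nat).
Hypotheses (ps_prime : all prime ps) (D_ge0 : 0 <= D).
Hypothesis ps_pow_dvd : {in ps, forall p, (p ^ e %| n)%N}.

(* Good residues are nonzero when ps is nonempty (p^2 divides 0). *)
Lemma good_gt0 p a : p \in ps -> good ps D a -> (0 < a)%N.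
Proof.
by move=> p_ps /andP[/allP/(_ p p_ps)]; case: a => //; rewrite dvdn0.
Qed.

Lemma good_omega_bounds a : good ps D a ->
  mu ps - D <= (omega ps a)%:R <= mu ps + D.
Proof.
case/andP=> _; rewrite -[_ ^+ 2]real_normK ?num_real // ler_sqr ?nnegrE //.
by rewrite ler_norml; case/andP => lo hi; apply/andP; split; lra.
Qed.

Lemma logn_prod_good p k (F : 'I_k -> nat) : p \in ps ->
  (forall i, good ps D (F i)) ->
  logn p (\prod_(i < k) F i) = (\sum_(i < k) (p %| F i))%N.
Proof.
move=> p_ps F_good; have p_pr := allP ps_prime p p_ps.
rewrite logn_prod // => [|i]; last exact: good_gt0 p_ps (F_good i).
apply: eq_bigr => i _; apply: logn_not_sq_dvd => //; first exact: good_gt0 p_ps _.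
by case/andP: (F_good i) => /allP/(_ p p_ps).
Qed.

(* Congruent products of fewer than e good factors have the same total
   omega, because each valuation at p in ps is below e and thus preserved
   modulo p ^ e. *)
Lemma omega_prod_eq k j (F : 'I_k -> nat) (G : 'I_j -> nat) :
  (k < e)%N -> (j < e)%N ->
  (forall i, good ps D (F i)) -> (forall i, good ps D (G i)) ->
  \prod_(i < k) F i = \prod_(i < j) G i %[mod n] ->
  (\sum_(i < k) omega ps (F i) = \sum_(i < j) omega ps (G i))%N.
Proof.
move=> k_lt_e j_lt_e F_good G_good eq_mod.
rewrite /omega exchange_big [RHS]exchange_big /=; apply: eq_big_seq => p p_ps.
have count_le m (H : 'I_m -> nat) : (\sum_(i < m) (p %| H i) <= m)%N.
  apply: (@leq_trans (\sum_(i < m) 1)); last by rewrite sum1_card card_ord.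
  by apply: leq_sum => i _; apply: leq_b1.
rewrite -(logn_prod_good p_ps F_good) -(logn_prod_good p_ps G_good).
apply: (@logn_eq_of_eqmod p e); rewrite ?prodn_gt0 ?(allP ps_prime) //.
- by move=> i; apply: good_gt0 p_ps (F_good i).
- by move=> i; apply: good_gt0 p_ps (G_good i).
- by rewrite -(modn_dvdm _ (ps_pow_dvd p_ps)) eq_mod modn_dvdm ?ps_pow_dvd.
- by rewrite (logn_prod_good p_ps F_good) (leq_ltn_trans (count_le _ _)).
- by rewrite (logn_prod_good p_ps G_good) (leq_ltn_trans (count_le _ _)).
Qed.

Lemma good_product_free k j (S : {set 'I_n}) :
  (2 * j%:R + 1) * D < mu ps -> (j < k)%N -> (k < e)%N ->
  {in S, forall a : 'I_n, good ps D a} -> product_free k j S.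
Proof.
move=> mu_large j_lt_k k_lt_e S_good [a [b [a_S [b_S eq_mod]]]].
have a_good i : good ps D (a i) by apply: S_good.
have b_good i : good ps D (b i) by apply: S_good.
have := omega_prod_eq k_lt_e (ltn_trans j_lt_k k_lt_e) a_good b_good eq_mod.
move/(congr1 (fun m => m%:R : rat)); rewrite !natr_sum => eq_sum.
have a_lo i : mu ps - D <= (omega ps (a i))%:R.
  by case/andP: (good_omega_bounds (a_good i)).
have b_hi i : (omega ps (b i))%:R <= mu ps + D.
  by case/andP: (good_omega_bounds (b_good i)).
have lower : k%:R * (mu ps - D) <= \sum_(i < k) (omega ps (a i))%:R.
  apply: le_trans (ler_sum _ (fun i _ => a_lo i)).
  by rewrite sumr_const card_ord mulr_natl.
have upper : \sum_(i < j) (omega ps (b i))%:R <= j%:R * (mu ps + D).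
  apply: le_trans (ler_sum _ (fun i _ => b_hi i)) _.
  by rewrite sumr_const card_ord mulr_natl.
have k_ge : j%:R + 1 <= k%:R :> rat by rewrite natr1 ler_nat.
have jD_ge0 : 0 <= j%:R * D :> rat by rewrite mulr_ge0.
have : (j%:R + 1) * (mu ps - D) <= k%:R * (mu ps - D).
  by rewrite ler_wpM2r // subr_ge0; lra.
lra.
Qed.

End GoodProductFree.

(* A finite set of primes with reciprocal sum at least B whose reciprocal
   squares sum to at most 1 / P: take all primes in (P, K) for K large. *)
Lemma large_primes_block P B : (0 < P)%N -> exists ps : seq nat,
  [/\ uniq ps, all prime ps, B%:R <= mu ps &
      \sum_(p <- ps) ((p ^ 2)%:R : rat)^-1 <= P%:R^-1].
Proof.
move=> P_gt0; have [K _ sum_ge] := prime_reciprocals_unbounded P B.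
exists [seq p <- index_iota P.+1 K | prime p].
split; rewrite ?filter_uniq ?iota_uniq ?filter_all // ?/mu big_filter //.
apply: le_trans (inv_sq_tail K P_gt0); rewrite big_mkcond.
by apply: ler_sum => p _; case: ifP; rewrite // invr_ge0.
Qed.

(* The Chebyshev term x mu / D^2 for D = mu / (4 m) equals 16 m^2 x / mu,
   which is at most x / (2 N) once mu >= 32 m^2 N. *)
Lemma chebyshev_term_le (R : realFieldType) (x m N M : R) :
  0 <= x -> 0 < m -> 0 < N -> 32 * m ^+ 2 * N <= M ->
  x * M / (M / (4 * m)) ^+ 2 <= x / N / 2.
Proof.
move=> x_ge0 m_pos N_pos M_large.
have M_pos : 0 < M by apply: lt_le_trans M_large; rewrite !mulr_gt0 ?exprn_gt0.
have -> : x * M / (M / (4 * m)) ^+ 2 = x * (16 * m ^+ 2 / M).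
  by field; rewrite !gt_eqF.
rewrite -[x / N / 2]mulrA; apply: ler_wpM2l => //.
rewrite ler_pdivrMr // (_ : _ * M = M / (2 * N)); last by field; rewrite gt_eqF.
by rewrite ler_pdivlMr ?mulr_gt0 //; lra.
Qed.

(* With mu >= 32 m^2 N, \sum 1/p^2 <= 1/(4N) and D = mu / (4m), the bad
   residues have density at most 1/(4N) + 16 m^2 / mu <= 1/N. *)
Lemma card_good_large ps n m N : uniq ps -> all prime ps ->
  {in ps, forall p, (p ^ 2 %| n)%N} -> (0 < m)%N -> (0 < N)%N ->
  (32 * m ^ 2 * N)%:R <= mu ps ->
  \sum_(p <- ps) ((p ^ 2)%:R : rat)^-1 <= (4 * N)%:R^-1 ->
  (N * n <= N * #|[set a : 'I_n | good ps (mu ps / (4 * m%:R)) a]| + n)%N.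
Proof.
move=> ps_uniq ps_prime sq_dvd m_gt0 N_gt0 mu_large sq_small.
set M := mu ps in mu_large *; set D := M / (4 * m%:R).
have m_pos : (0 : rat) < m%:R by rewrite ltr0n.
have N_pos : (0 : rat) < N%:R by rewrite ltr0n.
have M_pos : 0 < M.
  by apply: lt_le_trans mu_large; rewrite ltr0n !muln_gt0 ?expn_gt0 m_gt0 N_gt0.
have D_pos : 0 < D by rewrite divr_gt0 // mulr_gt0.
have := card_good ps_uniq ps_prime D_pos sq_dvd; rewrite -/M.
have sq_part : \sum_(p <- ps) n%:R / (p ^ 2)%:R <= n%:R / N%:R / 4 :> rat.
  rewrite -mulr_sumr -mulrA; apply: ler_wpM2l => //.
  by apply: le_trans sq_small _; rewrite natrM invfM mulrC.
have M_large : 32 * m%:R ^+ 2 * N%:R <= M by move: mu_large; rewrite 2!natrM natrX.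
have := chebyshev_term_le (ler0n _ n) m_pos N_pos M_large; rewrite -/D => dev_part.
have n_div_N_ge0 : 0 <= n%:R / N%:R :> rat by rewrite divr_ge0.
move=> card_ge.
have good_ge : n%:R - n%:R / N%:R <= #|[set a : 'I_n | good ps D a]|%:R :> rat.
  lra.
have nN : N%:R * (n%:R / N%:R) = n%:R :> rat by rewrite mulrC divfK ?gt_eqF.
have := ler_wpM2l (ltW N_pos) good_ge.
by rewrite mulrBr nN -(ler_nat rat) natrD !natrM; lra.
Qed.

(* The construction: primes ps with mu >= 32 m^2 N and \sum 1/p^2 <= 1/(4N),
   modulus n = \prod_(p in ps) p ^ (m + 1) and S the good residues for
   D = mu / (4 m).  Then S has density at least 1 - 1/N, and for j < k with
   k + j <= m we have k <= m < m + 1 and (2 j + 1) D <= m D = mu / 4 < mu.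
   (The case j = 0, i.e. no product of k elements of S is 1, is included.) *)
Lemma dense_product_free N m : (0 < N)%N -> (0 < m)%N ->
  exists n (S : {set 'I_n}), [/\ (0 < n)%N, (N * n <= N * #|S| + n)%N &
    forall k j, (j < k)%N -> (k + j <= m)%N -> product_free k j S].
Proof.
move=> N_gt0 m_gt0; have fourN_gt0 : (0 < 4 * N)%N by rewrite muln_gt0 N_gt0.
have [ps [ps_uniq ps_prime mu_large sq_small]] :=
  large_primes_block (32 * m ^ 2 * N) fourN_gt0.
pose n := (\prod_(p <- ps) p ^ m.+1)%N.
have pow_dvd : {in ps, forall p, (p ^ m.+1 %| n)%N}.
  by move=> p p_ps; rewrite /n (big_rem p p_ps) dvdn_mulr.
have n_gt0 : (0 < n)%N.
  rewrite /n big_seq_cond prodn_cond_gt0 // => p /andP[p_ps _].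
  by rewrite expn_gt0 prime_gt0 ?(allP ps_prime).
have m_pos : (0 : rat) < m%:R by rewrite ltr0n.
have mu_pos : 0 < mu ps.
  by apply: lt_le_trans mu_large; rewrite ltr0n !muln_gt0 ?expn_gt0 m_gt0 N_gt0.
set D := mu ps / (4 * m%:R).
have D_ge0 : 0 <= D by rewrite divr_ge0 ?mulr_ge0 ?ltW.
exists n, [set a : 'I_n | good ps D a]; split => //.
  apply: card_good_large => // p /pow_dvd; apply: dvdn_trans.
  by rewrite dvdn_exp2l.
move=> k j j_lt_k kj_le_m.
apply: (good_product_free (ps := ps) (D := D) (e := m.+1)) => //.
- have jm : 2 * j%:R + 1 <= m%:R :> rat.
    by rewrite -natrM natr1 ler_nat; lia.
  have mD : m%:R * D = mu ps / 4 by rewrite /D; field; rewrite gt_eqF.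
  have := ler_wpM2r D_ge0 jm; rewrite mD; lra.
- by rewrite ltnS (leq_trans (leq_addr j k) kj_le_m).
- by move=> a; rewrite inE.
Qed.

Local Close Scope ring_scope.

(* Re-importing the real numbers makes %R denote R_scope again, as in the
   statement (MathComp's ring_scope had taken over that delimiter). *)
From Stdlib Require Import Rdefinitions.

Theorem theorem3p1 (eps : R) (m : nat) :
  (0 < eps)%R -> 3 <= m ->
  exists (n : nat) (S : {set 'I_n}),
    0 < n /\
    (INR #|S| >= (1 - eps) * INR n)%R /\
    (forall k j : nat, 0 < j -> j < k -> k + j <= m -> product_free k j S).
Proof.
move=> eps_pos m_ge3; have [N N_eps] := INR_archimed eps 1 eps_pos.
have N_gt0 : (0 < N)%N.
  by case: N N_eps => [|N] //= N_eps; exfalso; rewrite Rmult_0_l in N_eps; Psatz.lra.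
have m_gt0 : 0 < m by apply: leq_trans m_ge3.
have [n [S [n_gt0 dense free]]] := dense_product_free N_gt0 m_gt0.
exists n, S; split => //; split; last by move=> k j _; apply: free.
have := le_INR _ _ (elimT ssrnat.leP dense); rewrite plus_INR !mult_INR => dense_R.
have N_pos : (0 < INR N)%R by apply/lt_0_INR/ssrnat.ltP.
have n_ge0 := pos_INR n; have S_ge0 := pos_INR #|S|; Psatz.nra.
Qed.
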